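(* Let $S\subset \mathbb{R}^2$ be such that $S$ and $S^\mathsf{c}$ satisfy the $r$-rolling condition. Then for every $\alpha>0$, any open ball of radius $\alpha$ with center in $S$ contains an open ball of radius $\tfrac12 \min\{\alpha,r\}$ which is included in $S$.
   Context: A set $T\subset\mathbb{R}^2$ satisfies the $r$-rolling condition ($r>0$) if for every $x \in \partial T$ there is an open ball $B$ of radius $r$ with $B \cap T = \emptyset$ and $x \in \partial B$. $S^\mathsf{c}=\mathbb{R}^2\setminus S$. *)

From Stdlib Require Import Reals Lra.
Open Scope R_scope.

Definition point := (R * R)%type.

Definition dist2 (p q : point) : R :=
  sqrt ((fst p - fst q) ^ 2 + (snd p - snd q) ^ 2).

Definition ball2 (c : point) (rho : R) (x : point) : Prop := dist2 c x < rho.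

Definition compl (S : point -> Prop) (x : point) : Prop := ~ S x.

Definition boundary (T : point -> Prop) (x : point) : Prop :=
  forall eps, 0 < eps ->
    (exists y, ball2 x eps y /\ T y) /\ (exists y, ball2 x eps y /\ ~ T y).

Definition rolling (r : R) (T : point -> Prop) : Prop :=
  forall x, boundary T x ->
    exists c : point,
      (forall y, ball2 c r y -> ~ T y) /\ boundary (ball2 c r) x.

(* Let rho = min(alpha, r)/2 and x in S; we may assume that B(x, rho) meets the complement,
   at distance delta < rho from x.  By the rolling condition for S^c every boundary point z
   carries an inner ball B(c, r) in S, and by that for S an outer ball B(c', r) missing S; the
   two balls are tangent at z.  If delta = 0 then x is a boundary point and we take z = x.
   Otherwise take z on the boundary with |x - z| close to delta: as x is at distance at least
   delta from B(c', r), |x - c'| >= r + delta, and Apollonius' identity for the median xz of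
   the triangle x c c' yields |x - c| <= r.  In both cases the ball of radius rho centred on
   [x, c] at distance rho |x - c| / r from x lies in B(c, r) and in B(x, 2 rho). *)

From Stdlib Require Import Reals Lra Psatz Classical.
Open Scope R_scope.

Definition sqd (p q : point) : R := (fst p - fst q) ^ 2 + (snd p - snd q) ^ 2.

Definition lerp (p q : point) (s : R) : point :=
  (fst p + s * (fst q - fst p), snd p + s * (snd q - snd p)).

Definition mid (p q : point) : point := ((fst p + fst q) / 2, (snd p + snd q) / 2).

Lemma sqd_nonneg p q : 0 <= sqd p q.
Proof. unfold sqd; apply Rplus_le_le_0_compat; apply pow2_ge_0. Qed.

Lemma sqd_sym p q : sqd p q = sqd q p.
Proof. unfold sqd; ring. Qed.

Lemma dist2_nonneg p q : 0 <= dist2 p q.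
Proof. apply sqrt_pos. Qed.

Lemma dist2_sqr p q : dist2 p q ^ 2 = sqd p q.
Proof. unfold dist2; rewrite <- Rsqr_pow2, Rsqr_sqrt; [reflexivity | apply sqd_nonneg]. Qed.

Lemma dist2_lt_sqd p q k : 0 <= k -> (dist2 p q < k <-> sqd p q < k ^ 2).
Proof. intros. pose proof (dist2_sqr p q). pose proof (dist2_nonneg p q). split; intros; nra. Qed.

Lemma dist2_le_sqd p q k : 0 <= k -> (dist2 p q <= k <-> sqd p q <= k ^ 2).
Proof. intros. pose proof (dist2_sqr p q). pose proof (dist2_nonneg p q). split; intros; nra. Qed.

Lemma dist2_eq_sqd p q k : 0 <= k -> (dist2 p q = k <-> sqd p q = k ^ 2).
Proof. intros. pose proof (dist2_sqr p q). pose proof (dist2_nonneg p q). split; intros; nra. Qed.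

Lemma dist2_sym p q : dist2 p q = dist2 q p.
Proof. unfold dist2; fold (sqd p q) (sqd q p); now rewrite sqd_sym. Qed.

Lemma dist2_refl p : dist2 p p = 0.
Proof. apply dist2_eq_sqd; [lra |]. unfold sqd; ring. Qed.

Lemma dist2_triangle p q s : dist2 p s <= dist2 p q + dist2 q s.
Proof.
  pose proof (dist2_sqr p q) as Hpq; pose proof (dist2_sqr q s) as Hqs.
  pose proof (dist2_nonneg p q); pose proof (dist2_nonneg q s).
  apply dist2_le_sqd; [lra |].
  set (a := dist2 p q) in *; set (b := dist2 q s) in *; clearbody a b.
  destruct p as [p1 p2], q as [q1 q2], s as [s1 s2]; unfold sqd in *; cbn [fst snd] in *.
  (* Cauchy-Schwarz via Lagrange's identity *)
  assert (Hcs : ((p1 - q1) * (q1 - s1) + (p2 - q2) * (q2 - s2)) ^ 2 <= (a * b) ^ 2).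
  { replace ((a * b) ^ 2) with (a ^ 2 * b ^ 2) by ring; rewrite Hpq, Hqs.
    assert (0 <= ((p1 - q1) * (q2 - s2) - (p2 - q2) * (q1 - s1)) ^ 2) by apply pow2_ge_0.
    lra. }
  assert ((p1 - q1) * (q1 - s1) + (p2 - q2) * (q2 - s2) <= a * b).
  { assert (0 <= a * b) by nra. nra. }
  nra.
Qed.

Lemma sqd_lerp_l p q s : sqd p (lerp p q s) = s ^ 2 * sqd p q.
Proof. unfold sqd, lerp; cbn; ring. Qed.

Lemma sqd_lerp_r p q s : sqd (lerp p q s) q = (1 - s) ^ 2 * sqd p q.
Proof. unfold sqd, lerp; cbn; ring. Qed.

Lemma sqd_lerp_lerp p q s t : sqd (lerp p q s) (lerp p q t) = (s - t) ^ 2 * sqd p q.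
Proof. unfold sqd, lerp; cbn; ring. Qed.

Lemma dist2_lerp_l p q s : 0 <= s -> dist2 p (lerp p q s) = s * dist2 p q.
Proof.
  intros. pose proof (dist2_nonneg p q). apply dist2_eq_sqd; [nra |].
  rewrite sqd_lerp_l, <- dist2_sqr; ring.
Qed.

Lemma dist2_lerp_r p q s : s <= 1 -> dist2 (lerp p q s) q = (1 - s) * dist2 p q.
Proof.
  intros. pose proof (dist2_nonneg p q). apply dist2_eq_sqd; [nra |].
  rewrite sqd_lerp_r, <- dist2_sqr; ring.
Qed.

Lemma dist2_lerp_lerp p q s t : dist2 (lerp p q s) (lerp p q t) = Rabs (s - t) * dist2 p q.
Proof.
  pose proof (dist2_nonneg p q). pose proof (Rabs_pos (s - t)).
  apply dist2_eq_sqd; [nra |].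
  rewrite sqd_lerp_lerp, <- dist2_sqr, <- (pow2_abs (s - t)); ring.
Qed.

Lemma lerp0 p q : lerp p q 0 = p.
Proof. destruct p; unfold lerp; cbn; f_equal; ring. Qed.

Lemma lerp1 p q : lerp p q 1 = q.
Proof. destruct p, q; unfold lerp; cbn; f_equal; ring. Qed.

Lemma sqd_apollonius p a b : sqd p a + sqd p b = 2 * sqd p (mid a b) + sqd a b / 2.
Proof. unfold sqd, mid; cbn; field. Qed.

Lemma boundary_compl (S : point -> Prop) z : boundary S z -> boundary (compl S) z.
Proof.
  intros H eps Heps; destruct (H eps Heps) as [[y1 [B1 S1]] [y2 [B2 S2]]].
  split; [exists y2 | exists y1]; unfold compl; auto.
Qed.

Lemma boundary_ball2 c r z : boundary (ball2 c r) z -> dist2 c z = r.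
Proof.
  intros H; unfold ball2 in *.
  destruct (Rtotal_order (dist2 c z) r) as [Hlt | [Heq | Hgt]]; [exfalso | exact Heq | exfalso].
  - destruct (H (r - dist2 c z)) as [_ [y [Hy Hyc]]]; [lra |].
    pose proof (dist2_triangle c z y); unfold ball2 in Hy; lra.
  - destruct (H (dist2 c z - r)) as [[y [Hy Hyc]] _]; [lra |].
    pose proof (dist2_triangle c y z); rewrite (dist2_sym y z) in *; unfold ball2 in Hy; lra.
Qed.

Lemma ball2_sub c r c' rho : dist2 c c' + rho <= r -> forall y, ball2 c' rho y -> ball2 c r y.
Proof. intros H y Hy; unfold ball2 in *; pose proof (dist2_triangle c c' y); lra. Qed.

Lemma boundary_on_segment (S : point -> Prop) x y : S x -> ~ S y ->
  exists z, boundary S z /\ dist2 x z <= dist2 x y.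
Proof.
  intros Sx Sy.
  (* [z] has parameter [sup {t in [0,1] | S (lerp x y t)}] *)
  set (E := fun t => 0 <= t <= 1 /\ S (lerp x y t)).
  destruct (completeness E) as [m [Hub Hlub]].
  { exists 1; intros t [Ht _]; lra. }
  { exists 0; split; [lra | now rewrite lerp0]. }
  assert (Hm0 : 0 <= m) by (apply Hub; split; [lra | now rewrite lerp0]).
  assert (Hm1 : m <= 1) by (apply Hlub; intros t [Ht _]; lra).
  pose proof (dist2_nonneg x y) as Hd.
  exists (lerp x y m); split; [| rewrite dist2_lerp_l by lra; nra].
  intros eps Heps.
  set (h := eps / (dist2 x y + 1)).
  assert (Hh : 0 < h) by (apply Rdiv_lt_0_compat; lra).
  assert (Hnear : forall t, Rabs (m - t) < h -> ball2 (lerp x y m) eps (lerp x y t)).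
  { intros t Ht; unfold ball2; rewrite dist2_lerp_lerp.
    apply Rle_lt_trans with (h * dist2 x y); [apply Rmult_le_compat_r; lra |].
    unfold h; apply Rmult_lt_reg_r with (dist2 x y + 1); [lra |].
    field_simplify; nra. }
  split.
  - apply NNPP; intro Hno.
    assert (m <= m - h / 2); [| lra].
    apply Hlub; intros t Et.
    destruct (Rle_lt_dec t (m - h / 2)) as [| Hlt]; [assumption | exfalso].
    apply Hno; exists (lerp x y t); split; [| apply Et].
    apply Hnear; pose proof (Hub t Et); rewrite Rabs_right; lra.
  - destruct (Req_dec m 1) as [-> | Hm].
    + exists y; rewrite lerp1; split; [unfold ball2; rewrite dist2_refl; lra | exact Sy].
    + set (t := Rmin 1 (m + h / 2)).
      assert (m < t) by (apply Rmin_glb_lt; lra).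
      assert (t <= m + h / 2) by apply Rmin_r.
      assert (t <= 1) by apply Rmin_l.
      exists (lerp x y t); split.
      * apply Hnear; rewrite Rabs_left; lra.
      * intro St; assert (t <= m) by (apply Hub; split; [lra | exact St]); lra.
Qed.

Lemma tangent_balls_midpoint (S : point -> Prop) c c' z r : 0 < r ->
  (forall y, ball2 c r y -> S y) -> (forall y, ball2 c' r y -> ~ S y) ->
  dist2 c z = r -> dist2 c' z = r -> z = mid c c'.
Proof.
  intros Hr Hin Hout Hc Hc'.
  apply dist2_eq_sqd in Hc, Hc'; try lra.
  (* the balls are disjoint, so their midpoint lies in neither *)
  assert (Hfar : 4 * r ^ 2 <= sqd c c').
  { apply Rnot_lt_le; intro Hlt.
    assert (Hm : sqd c (mid c c') = sqd c c' / 4 /\ sqd c' (mid c c') = sqd c c' / 4)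
      by (unfold sqd, mid; cbn [fst snd]; split; field).
    apply (Hout (mid c c')); [| apply Hin]; unfold ball2; apply dist2_lt_sqd; lra. }
  assert (Hz : sqd z (mid c c') = 0).
  { pose proof (sqd_apollonius z c c'); pose proof (sqd_nonneg z (mid c c')).
    rewrite (sqd_sym z c), (sqd_sym z c') in *; lra. }
  destruct z as [z1 z2]; unfold sqd, mid in *; cbn [fst snd] in *.
  assert (0 <= (z1 - (fst c + fst c') / 2) ^ 2) by apply pow2_ge_0.
  assert (0 <= (z2 - (snd c + snd c') / 2) ^ 2) by apply pow2_ge_0.
  f_equal; apply Rminus_diag_uniq, Rsqr_0_uniq; rewrite Rsqr_pow2; lra.
Qed.

Lemma dist2_ball2_ge x c r delta : 0 < r -> 0 < delta ->
  (forall y, ball2 c r y -> delta <= dist2 x y) -> r + delta <= dist2 x c.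
Proof.
  intros Hr Hdelta Hfar; apply Rnot_lt_le; intro HL.
  pose proof (dist2_nonneg c x).
  (* the point dividing [c x] in the ratio [r : delta] *)
  set (s := r / (r + delta)).
  assert (Hs : s * (r + delta) = r) by (unfold s; field; lra).
  assert (0 <= s <= 1) by (split; apply Rmult_le_reg_r with (r + delta); lra).
  assert (Hin : ball2 c r (lerp c x s)).
  { unfold ball2; rewrite dist2_lerp_l, dist2_sym by lra; nra. }
  pose proof (Hfar _ Hin) as Hd.
  rewrite dist2_sym, dist2_lerp_r, dist2_sym in Hd by lra; nra.
Qed.

Lemma inscribed_ball (S : point -> Prop) x c r alpha rho : 0 < rho <= r -> 2 * rho <= alpha ->
  (forall y, ball2 c r y -> S y) -> dist2 x c <= r ->
  exists c', (forall y, ball2 c' rho y -> ball2 x alpha y) /\ (forall y, ball2 c' rho y -> S y).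
Proof.
  intros Hrho Halpha Hin Hxc.
  pose proof (dist2_nonneg x c).
  assert (Hs : 0 <= rho / r <= 1)
    by (split; [apply Rmult_le_pos; [lra | left; apply Rinv_0_lt_compat; lra]
               | apply Rmult_le_reg_r with r; [lra | field_simplify; lra]]).
  assert (Hsr : rho / r * r = rho) by (field; lra).
  exists (lerp x c (rho / r)); split; intros y Hy.
  - apply (ball2_sub x alpha (lerp x c (rho / r)) rho); [| exact Hy].
    rewrite dist2_lerp_l by lra; nra.
  - apply Hin, (ball2_sub c r (lerp x c (rho / r)) rho); [| exact Hy].
    rewrite dist2_sym, dist2_lerp_r by lra; nra.
Qed.

Lemma rolling_outer_ball (S : point -> Prop) r z : rolling r S -> boundary S z ->
  exists c, dist2 c z = r /\ forall y, ball2 c r y -> ~ S y.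
Proof.
  intros Hroll Hz; destruct (Hroll z Hz) as [c [Hout Hc]].
  exists c; split; [now apply boundary_ball2 | exact Hout].
Qed.

Lemma rolling_compl_inner_ball (S : point -> Prop) r z : rolling r (compl S) -> boundary S z ->
  exists c, dist2 c z = r /\ forall y, ball2 c r y -> S y.
Proof.
  intros Hroll Hz; destruct (rolling_outer_ball (compl S) r z Hroll (boundary_compl S z Hz))
    as [c [Hc Hin]].
  exists c; split; [exact Hc | intros y Hy; apply NNPP, Hin, Hy].
Qed.

Lemma dist2_glb (T : point -> Prop) x w : T w ->
  exists delta, 0 <= delta <= dist2 x w /\ (forall y, T y -> delta <= dist2 x y) /\
    forall eps, 0 < eps -> exists y, T y /\ dist2 x y < delta + eps.
Proof.
  intros Tw.
  set (LB := fun t => forall y, T y -> t <= dist2 x y).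
  destruct (completeness LB) as [delta [Hub Hlub]].
  { exists (dist2 x w); intros t Ht; exact (Ht w Tw). }
  { exists 0; intros y _; apply dist2_nonneg. }
  assert (Hlb : LB delta) by (intros y Ty; apply Hlub; intros t Ht; exact (Ht y Ty)).
  exists delta; split; [| split; [exact Hlb |]].
  - split; [apply Hub; intros y _; apply dist2_nonneg | exact (Hlb w Tw)].
  - intros eps Heps; apply NNPP; intro Hno.
    assert (delta + eps <= delta); [| lra].
    apply Hub; intros y Ty; apply Rnot_lt_le; intro Hy; apply Hno; eauto.
Qed.

Lemma dist2_inner_center_le x z c c' r delta eps :
  0 < delta <= r / 2 -> 0 < eps <= delta -> eps <= r / 4 ->
  z = mid c c' -> dist2 c z = r -> dist2 x z < delta + eps -> r + delta <= dist2 x c' ->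
  dist2 x c <= r.
Proof.
  intros Hdelta Heps Heps_r -> Hc Hxz Hxc'.
  assert (Hcc' : sqd c c' = 4 * r ^ 2).
  { apply dist2_eq_sqd in Hc; [| lra].
    replace (sqd c c') with (4 * sqd c (mid c c')) by (unfold sqd, mid; cbn [fst snd]; field).
    lra. }
  apply dist2_lt_sqd in Hxz; [| lra].
  assert (Hxc'2 : (r + delta) ^ 2 <= sqd x c')
    by (rewrite <- dist2_sqr; apply pow_incr; lra).
  apply dist2_le_sqd; [lra |].
  pose proof (sqd_apollonius x c c').
  assert (eps * eps <= delta * eps) by (apply Rmult_le_compat_r; lra).
  assert (delta * (delta + 6 * eps) <= delta * (2 * r)) by (apply Rmult_le_compat_l; lra).
  nra.
Qed.

Theorem lemma1 (S : point -> Prop) (r : R) (hr : 0 < r) :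
  rolling r S -> rolling r (compl S) ->
  forall (alpha : R), 0 < alpha ->
  forall x : point, S x ->
  exists c : point,
    (forall y, ball2 c (Rmin alpha r / 2) y -> ball2 x alpha y) /\
    (forall y, ball2 c (Rmin alpha r / 2) y -> S y).
Proof.
  intros HS HC alpha Halpha x Sx.
  pose proof (Rmin_l alpha r); pose proof (Rmin_r alpha r).
  assert (0 < Rmin alpha r) by (apply Rmin_glb_lt; lra).
  set (rho := Rmin alpha r / 2) in *.
  assert (Hrho : 0 < rho <= r / 2) by (unfold rho; lra).
  assert (Hrho_alpha : 2 * rho <= alpha) by (unfold rho; lra).
  destruct (classic (forall y, ball2 x rho y -> S y)) as [Hall | Hnot].
  { exists x; split; [intros y Hy; unfold ball2 in *; lra | exact Hall]. }
  apply not_all_ex_not in Hnot as [w0 Hw0]; apply imply_to_and in Hw0 as [Hw0 Sw0].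
  destruct (dist2_glb (compl S) x w0 Sw0) as [delta [[Hdelta0 Hdelta_w0] [Hlb Happrox]]].
  unfold ball2 in Hw0.
  destruct (Rle_lt_dec delta 0) as [Hdelta | Hdelta].
  - assert (Bx : boundary S x).
    { intros eps Heps; split.
      - exists x; split; [unfold ball2; rewrite dist2_refl; lra | exact Sx].
      - destruct (Happrox eps Heps) as [y [Sy Hy]]; exists y; split; [unfold ball2; lra | exact Sy]. }
    destruct (rolling_compl_inner_ball S r x HC Bx) as [c [Hc Hin]].
    apply (inscribed_ball S x c r alpha rho); [lra | assumption | assumption |].
    rewrite dist2_sym; lra.
  - pose proof (Rmin_l delta (r / 4)); pose proof (Rmin_r delta (r / 4)).
    assert (0 < Rmin delta (r / 4)) by (apply Rmin_glb_lt; lra).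
    set (eps := Rmin delta (r / 4)) in *.
    destruct (Happrox eps) as [w [Sw Hw]]; [assumption |].
    destruct (boundary_on_segment S x w Sx Sw) as [z [Bz Hz]].
    destruct (rolling_compl_inner_ball S r z HC Bz) as [c [Hc Hin]].
    destruct (rolling_outer_ball S r z HS Bz) as [c' [Hc' Hout]].
    apply (inscribed_ball S x c r alpha rho); [lra | assumption | assumption |].
    apply (dist2_inner_center_le x z c c' r delta eps); try lra.
    + exact (tangent_balls_midpoint S c c' z r hr Hin Hout Hc Hc').
    + apply dist2_ball2_ge; [lra | lra |]; intros y Hy; exact (Hlb y (Hout y Hy)).
Qed.
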